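(* Let $m\ge o\ge 0$ and $n\ge 0$ be integers with $m+n+o\ge 4$ such that the graph $T_n\vee(K_m+K_o)$ is connected and is neither a complete graph nor a complete bipartite graph. Let the vertices of $K_m$, $T_n$, $K_o$ carry the indeterminates $x_1,\dots,x_m$, $y_1,\dots,y_n$, $z_1,\dots,z_o$ respectively. Then the third critical ideal $I_3=I_3(T_n\vee(K_m+K_o),\{X,Y,Z\})$ is: - $\langle 2, x_1+1,\dots,x_m+1, y_1,\dots,y_n, z_1+1,\dots,z_o+1\rangle$ if $m,n,o\ge 2$; - $\langle x_1+1,\dots,x_m+1, y_1+2, z_1+1,\dots,z_o+1\rangle$ if $m\ge 2$, $n=1$, $o\ge 2$; - $\langle x_1+1,\dots,x_m+1, y_1,\dots,y_n, z_1-1\rangle$ if $m\ge 2$, $n\ge 2$, $o=1$; - $\langle x_1+z_1, y_1,\dots,y_n\rangle$ if $m=1$, $n\ge 3$, $o=1$; - $\langle x_1+z_1,\ y_1+y_2,\ y_2z_1\rangle$ if $m=1$, $n=2$, $o=1$; - $\langle x_1+1,\dots,x_m+1,\ z_1y_1+z_1-1\rangle$ if $m\ge 2$, $n=1$, $o=1$; - $\langle x_1+1,\dots,x_m+1, y_1,\dots,y_n\rangle$ if $m\ge 3$, $n\ge 3$, $o=0$; - $\langle x_1+x_2+2, y_1,\dots,y_n\rangle$ if $m=2$, $n\ge 3$, $o=0$; - $\langle x_1+1,\dots,x_m+1,\ y_1y_2+y_1+y_2\rangle$ if $m\ge 3$, $n=2$, $o=0$; - $\langle x_1+x_2+2,\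 x_2y_1+y_1,\ x_2y_2+y_2,\ y_1y_2+y_1+y_2\rangle$ if $m=2$, $n=2$, $o=0$.
   Context: For a finite graph $G$ with an indeterminate $x_u$ for each vertex $u$, the generalized Laplacian matrix $L(G,X_G)$ is the matrix indexed by $V(G)$ with $(u,u)$-entry $x_u$ and $(u,v)$-entry $-m_{uv}$ for $u\ne v$, $m_{uv}$ being the number of edges between $u$ and $v$. The third critical ideal $I_3(G,X_G)$ is the ideal of $\mathbb{Z}[X_G]$ generated by all $3\times 3$ minors of $L(G,X_G)$. $T_n$ is the edgeless graph on $n$ vertices, $K_m$ the complete graph on $m$ vertices ($K_0$ is empty), $+$ denotes disjoint union and $G\vee H$ the join (disjoint union plus all edges between $G$ and $H$). *)

From HB Require Import structures.
From mathcomp Require Import all_boot all_order all_algebra.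
From mathcomp Require Import mpoly.
Set Implicit Arguments. Unset Strict Implicit. Unset Printing Implicit Defensive.
Import GRing.Theory.
Local Open Scope ring_scope.

Definition graph_connected (T : finType) (e : rel T) : Prop :=
  forall u v : T, connect e u v.
Definition graph_complete (T : finType) (e : rel T) : Prop :=
  forall u v : T, u != v -> e u v.
Definition graph_complete_bipartite (T : finType) (e : rel T) : Prop :=
  exists A : {set T}, [/\ A != set0, ~: A != set0 &
    forall u v : T, e u v = ((u \in A) != (v \in A))].

(* ---------- the graph T_n \/ (K_m + K_o) ----------
   Vertex set 'I_(m+n+o): vertices 0..m-1 form K_m (class 0),
   m..m+n-1 form T_n (class 1), m+n..m+n+o-1 form K_o (class 2). *)
Definition vclass (m n o : nat) (u : 'I_(m + n + o)) : nat :=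
  if (u < m)%N then 0%N else if (u < m + n)%N then 1%N else 2%N.

Definition joinG (m n o : nat) : rel 'I_(m + n + o) :=
  fun u v => (u != v) &&
    [|| (vclass u == 0%N) && (vclass v == 0%N),
        (vclass u == 2%N) && (vclass v == 2%N)
      | (vclass u == 1%N) != (vclass v == 1%N)].

Definition gen_laplacian (N : nat) (e : rel 'I_N) : 'M[{mpoly int[N]}]_N :=
  \matrix_(u, v) (if u == v then 'X_u else - ((e u v : nat)%:R)).

Definition ideal_gen (R : comRingType) (S : R -> Prop) (p : R) : Prop :=
  exists (k : nat) (c g : 'I_k -> R),
    (forall i, S (g i)) /\ p = \sum_(i < k) c i * g i.

Definition same_ideal (R : comRingType) (S S' : R -> Prop) : Prop :=
  forall p : R, ideal_gen S p <-> ideal_gen S' p.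

Definition is_minor3 (R : comRingType) (N : nat) (L : 'M[R]_N) (p : R) : Prop :=
  exists f g : 'I_3 -> 'I_N,
    [/\ (forall i j : 'I_3, (i < j)%N -> (f i < f j)%N),
        (forall i j : 'I_3, (i < j)%N -> (g i < g j)%N) &
        p = \det (\matrix_(i, j) L (f i) (g j))].

Definition crit3_gens (N : nat) (e : rel 'I_N) : {mpoly int[N]} -> Prop :=
  is_minor3 (gen_laplacian e).

(* the variable attached to vertex k (0-based); 0 if out of range (never used so) *)
Definition Xv (N k : nat) : {mpoly int[N]} :=
  if insub k is Some i then 'X_i else 0.

(* 1-based names: x_i (K_m), y_j (T_n), z_k (K_o) *)
Definition vx (m n o i : nat) : {mpoly int[m + n + o]} := Xv (m + n + o) (i.-1).
Definition vy (m n o j : nat) : {mpoly int[m + n + o]} := Xv (m + n + o) (m + j).-1.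
Definition vz (m n o k : nat) : {mpoly int[m + n + o]} := Xv (m + n + o) (m + n + k).-1.

Arguments joinG : clear implicits.
Arguments vx : clear implicits.
Arguments vy : clear implicits.
Arguments vz : clear implicits.
Arguments Xv : clear implicits.

(* Each proposed generator is, up to sign, one explicit 3x3 minor of the
   generalized Laplacian L, which gives one inclusion.  Conversely, modulo the
   proposed ideal J every variable is congruent to a value depending only on the
   block of its vertex (its class among K_m, T_n, K_o, refined to single vertices
   when m = 2 or n = 2 and o = 0).  So L is congruent modulo J to the inflation of
   a 3x3 or 4x4 block matrix M, every 3-minor of an inflation is zero or, up to
   sign, a 3-minor of M, and the 3-minors of M lie in J by direct computation.
   For m = o = 1 the graph is the complete bipartite graph K_{2,n}. *)

From HB Require Import structures.
From mathcomp Require Import all_boot all_order all_algebra.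
From mathcomp Require Import mpoly.
From mathcomp Require Import ring zify.
Import GRing.Theory.
Local Open Scope ring_scope.
Set Implicit Arguments. Unset Strict Implicit.

Section IdealGen.
Variable R : comNzRingType.
Implicit Types (S T : R -> Prop) (a b c d r : R).

Lemma ideal_gen0 S : ideal_gen S 0.
Proof. by exists 0%N, (fun _ => 0), (fun=> 0); split; [case | rewrite big_ord0]. Qed.

Lemma ideal_gen_mem S a : S a -> ideal_gen S a.
Proof. by move=> Sa; exists 1%N, (fun=> 1), (fun=> a); rewrite big_ord1 mul1r. Qed.

Lemma ideal_genD S a b : ideal_gen S a -> ideal_gen S b -> ideal_gen S (a + b).
Proof.
move=> [k1 [c1 [g1 [S1 ->]]]] [k2 [c2 [g2 [S2 ->]]]].
pose glue (T : Type) (h1 : 'I_k1 -> T) (h2 : 'I_k2 -> T) i :=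
  match split i with inl j => h1 j | inr j => h2 j end.
exists (k1 + k2)%N, (glue _ c1 c2), (glue _ g1 g2); split.
  by move=> i; rewrite /glue; case: (split i).
by rewrite big_split_ord /glue; congr (_ + _); apply: eq_bigr => i _;
  rewrite ?(unsplitK (inl _ i)) ?(unsplitK (inr _ i)).
Qed.

Lemma ideal_genMl S r a : ideal_gen S a -> ideal_gen S (r * a).
Proof.
move=> [k [c [g [Sg ->]]]]; exists k, (fun i => r * c i), g; split => //.
by rewrite big_distrr; apply: eq_bigr => i _ /=; rewrite mulrA.
Qed.

Lemma ideal_genMr S r a : ideal_gen S a -> ideal_gen S (a * r).
Proof. by rewrite mulrC; apply: ideal_genMl. Qed.

Lemma ideal_genN S a : ideal_gen S a -> ideal_gen S (- a).
Proof. by rewrite -mulN1r; apply: ideal_genMl. Qed.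

Lemma ideal_genB S a b : ideal_gen S a -> ideal_gen S b -> ideal_gen S (a - b).
Proof. by move=> Sa Sb; apply: ideal_genD Sa (ideal_genN Sb). Qed.

Lemma ideal_gen_eq S a b : ideal_gen S a -> a = b -> ideal_gen S b.
Proof. by move=> Sa <-. Qed.

Lemma ideal_gen_pm S a b : ideal_gen S a -> b = a \/ b = - a -> ideal_gen S b.
Proof. by move=> Sa [->|->] //; apply: ideal_genN. Qed.

Lemma ideal_gen_trans S T p :
  (forall a, T a -> ideal_gen S a) -> ideal_gen T p -> ideal_gen S p.
Proof.
move=> TS [k [c [g [Tg ->]]]]; elim/big_ind: _ => [|a b|i _].
- exact: ideal_gen0.
- exact: ideal_genD.
- exact/ideal_genMl/TS.
Qed.

Lemma same_idealP S T :
  (forall a, S a -> ideal_gen T a) -> (forall a, T a -> ideal_gen S a) ->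
  same_ideal S T.
Proof. by move=> ST TS p; split; apply: ideal_gen_trans. Qed.

Definition cong S a b := ideal_gen S (a - b).

Lemma cong_refl S a : cong S a a.
Proof. by rewrite /cong subrr; apply: ideal_gen0. Qed.

Lemma congD S a b c d : cong S a b -> cong S c d -> cong S (a + c) (b + d).
Proof.
move=> ab cd; rewrite /cong; have -> : a + c - (b + d) = (a - b) + (c - d) by ring.
exact: ideal_genD.
Qed.

Lemma congM S a b c d : cong S a b -> cong S c d -> cong S (a * c) (b * d).
Proof.
move=> ab cd; rewrite /cong; have -> : a * c - b * d = (a - b) * c + b * (c - d) by ring.
exact: ideal_genD (ideal_genMr _ ab) (ideal_genMl _ cd).
Qed.

Lemma cong_ideal S a b : cong S a b -> ideal_gen S b -> ideal_gen S a.
Proof. by move=> ab Sb; rewrite -(subrK b a); apply: ideal_genD. Qed.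

Lemma cong_opp_gen S a c : ideal_gen S (a + c) -> cong S a (- c).
Proof. by rewrite /cong opprK. Qed.

Lemma cong_gen0 S a : ideal_gen S a -> cong S a 0.
Proof. by rewrite /cong subr0. Qed.

Lemma cong_det S k (A B : 'M[R]_k) :
  (forall i j, cong S (A i j) (B i j)) -> cong S (\det A) (\det B).
Proof.
move=> AB; apply: (big_ind2 (cong S) (cong_refl _ _) (@congD _)) => s _.
apply/congM/(big_ind2 (cong S) (cong_refl _ _) (@congM _)) => [|i _].
  exact: cong_refl.
exact: AB.
Qed.
End IdealGen.

Section Minor3.
Variable R : comNzRingType.

Definition minor3 (I : Type) (e : I -> I -> R) (a0 a1 a2 b0 b1 b2 : I) : R :=
  e a0 b0 * (e a1 b1 * e a2 b2 - e a1 b2 * e a2 b1)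
  - e a0 b1 * (e a1 b0 * e a2 b2 - e a1 b2 * e a2 b0)
  + e a0 b2 * (e a1 b0 * e a2 b1 - e a1 b1 * e a2 b0).

Lemma det3 (A : 'M[R]_3) : \det A = minor3 A 0 1 2 0 1 2.
Proof.
have det2 (B : 'M[R]_2) : \det B = B 0 0 * B 1 1 - B 0 1 * B 1 0.
  pose b i j := B (inord i) (inord j).
  have bE i j : B i j = b i j by rewrite /b !inord_val.
  rewrite (expand_det_row _ 0) !big_ord_recr big_ord0 /= /cofactor !det_mx11 !mxE.
  by rewrite !bE /= expr0 expr1; ring.
pose a i j := A (inord i) (inord j).
have aE i j : A i j = a i j by rewrite /a !inord_val.
rewrite (expand_det_row _ 0) !big_ord_recr big_ord0 /= /cofactor !det2 !mxE.
by rewrite /minor3 !aE /= expr0 expr1 expr2; ring.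
Qed.

Variables (N : nat) (L : 'M[R]_N).

Lemma det_submx3 (f g : 'I_3 -> 'I_N) :
  \det (\matrix_(i, j) L (f i) (g j)) = minor3 L (f 0) (f 1) (f 2) (g 0) (g 1) (g 2).
Proof. by rewrite det3 /minor3 !mxE. Qed.

Lemma sorted_minor3 (a0 a1 a2 b0 b1 b2 : 'I_N) :
  (a0 < a1 < a2)%N -> (b0 < b1 < b2)%N -> is_minor3 L (minor3 L a0 a1 a2 b0 b1 b2).
Proof.
move=> /andP[a01 a12] /andP[b01 b12].
pose tr (x0 x1 x2 : 'I_N) (i : 'I_3) := nth x0 [:: x0; x1; x2] i.
exists (tr a0 a1 a2), (tr b0 b1 b2); split; last by rewrite det_submx3.
- by case=> [[|[|[|]]]] // ? [[|[|[|]]]] //= ?; rewrite ?(ltn_trans a01 a12).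
- by case=> [[|[|[|]]]] // ? [[|[|[|]]]] //= ?; rewrite ?(ltn_trans b01 b12).
Qed.

Lemma ord_triple_ind (Q : 'I_N -> 'I_N -> 'I_N -> Prop) :
  (forall a0 a1 a2 : 'I_N, (a0 < a1 < a2)%N -> Q a0 a1 a2) ->
  (forall a0 a1 a2, Q a0 a1 a2 -> Q a1 a0 a2) ->
  (forall a0 a1 a2, Q a0 a1 a2 -> Q a0 a2 a1) ->
  (forall a0 a2, Q a0 a0 a2) ->
  forall a0 a1 a2, Q a0 a1 a2.
Proof.
move=> sorted Q01 Q12 Qeq a0 a1 a2.
case: (eqVneq a0 a1) => [<-|n01]; first exact: Qeq.
case: (eqVneq a0 a2) => [<-|n02]; first by apply: (Q12); apply: Qeq.
case: (eqVneq a1 a2) => [<-|n12]; first by apply: (Q01); apply: (Q12); apply: Qeq.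
move: n01 n02 n12; rewrite -!(inj_eq (@ord_inj N)) !neq_ltn => /orP[] ? /orP[] ? /orP[] ?;
  first [ exfalso; lia | by apply: (sorted); lia
        | by apply: (Q01); apply: (sorted); lia | by apply: (Q12); apply: (sorted); lia
        | by apply: (Q01); apply: (Q12); apply: (sorted); lia
        | by apply: (Q12); apply: (Q01); apply: (sorted); lia
        | by apply: (Q01); apply: (Q12); apply: (Q01); apply: (sorted); lia ].
Qed.

Lemma minor3_ideal (a0 a1 a2 b0 b1 b2 : 'I_N) :
  ideal_gen (is_minor3 L) (minor3 L a0 a1 a2 b0 b1 b2).
Proof.
have swap (p q : R) : q = - p -> ideal_gen (is_minor3 L) p -> ideal_gen (is_minor3 L) q.
  by move=> -> /ideal_genN.
have zero (p : R) : p = 0 -> ideal_gen (is_minor3 L) p by move->; apply: ideal_gen0.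
move: a0 a1 a2 b0 b1 b2; apply: ord_triple_ind => [a0 a1 a2 sa||| a0 a2 b0 b1 b2].
- apply: ord_triple_ind => [b0 b1 b2 sb||| b0 b2].
  + exact/ideal_gen_mem/sorted_minor3.
  + by move=> ? ? ? h; apply: swap h; rewrite /minor3; ring.
  + by move=> ? ? ? h; apply: swap h; rewrite /minor3; ring.
  + by apply: zero; rewrite /minor3; ring.
- by move=> ? ? ? h b0 b1 b2; apply: swap (h b0 b1 b2); rewrite /minor3; ring.
- by move=> ? ? ? h b0 b1 b2; apply: swap (h b0 b1 b2); rewrite /minor3; ring.
- by apply: zero; rewrite /minor3; ring.
Qed.

Lemma submx3_ideal (f g : 'I_3 -> 'I_N) :
  ideal_gen (is_minor3 L) (\det (\matrix_(i, j) L (f i) (g j))).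
Proof. by rewrite det_submx3; apply: minor3_ideal. Qed.
End Minor3.

Lemma minor3_quotient (R : comNzRingType) (N K : nat) (L : 'M[R]_N) (M : 'M[R]_K)
    (c : 'I_N -> 'I_K) (S : R -> Prop) :
  (forall u v, cong S (L u v) (M (c u) (c v))) ->
  (forall p, is_minor3 M p -> ideal_gen S p) ->
  forall p, is_minor3 L p -> ideal_gen S p.
Proof.
move=> LM MS p [f [g [_ _ ->]]].
apply: cong_ideal (cong_det (B := \matrix_(i, j) M (c (f i)) (c (g j))) _) _.
  by move=> i j; rewrite !mxE.
exact: ideal_gen_trans MS (submx3_ideal _ _ _).
Qed.

Lemma ord3P (i : 'I_3) : [\/ i = 0, i = 1 | i = 2%:R].
Proof.
by case: i => [[|[|[|?]]] ?] //; [constructor 1 | constructor 2 | constructor 3]; apply: val_inj.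
Qed.

Lemma increasing3_id (f : 'I_3 -> 'I_3) :
  (forall i j : 'I_3, (i < j)%N -> (f i < f j)%N) -> f =1 id.
Proof.
move=> incr i; apply: ord_inj.
have f01 := incr 0 1 isT; have f12 := incr 1 2 isT; have f2 := ltn_ord (f 2%:R).
by case: (ord3P i) => -> /=; lia.
Qed.

Lemma is_minor3_det (R : comNzRingType) (M : 'M[R]_3) p : is_minor3 M p -> p = \det M.
Proof.
move=> [f [g [/increasing3_id f1 /increasing3_id g1 ->]]].
by congr (\det _); apply/matrixP => i j; rewrite mxE f1 g1.
Qed.

Lemma increasing3_lift (f : 'I_3 -> 'I_4) :
  (forall i j : 'I_3, (i < j)%N -> (f i < f j)%N) -> exists r : 'I_4, f =1 lift r.
Proof.
move=> incr; have f01 := incr 0 1 isT; have f12 := incr 1 2 isT; have f2 := ltn_ord (f 2%:R).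
have lift_ord k (k4 : (k < 4)%N) (i : 'I_3) : lift (Ordinal k4) i = ((k <= i) + i)%N :> nat.
  by [].
have : (f 0 = 1%N :> nat /\ f 1 = 2%N :> nat /\ f 2%:R = 3%N :> nat) \/
       (f 0 = 0%N :> nat /\ f 1 = 2%N :> nat /\ f 2%:R = 3%N :> nat) \/
       (f 0 = 0%N :> nat /\ f 1 = 1%N :> nat /\ f 2%:R = 3%N :> nat) \/
       (f 0 = 0%N :> nat /\ f 1 = 1%N :> nat /\ f 2%:R = 2%N :> nat) by lia.
case=> [|[|[|]]] [? [? ?]]; [exists (@Ordinal 4 0 isT) | exists (@Ordinal 4 1 isT)
  | exists (@Ordinal 4 2 isT) | exists (@Ordinal 4 3 isT)] => i;
  apply: ord_inj; rewrite lift_ord; case: (ord3P i) => -> /=; lia.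
Qed.

Lemma is_minor3_cofactor (R : comNzRingType) (M : 'M[R]_4) p :
  is_minor3 M p -> exists r c : 'I_4, p = \det (row' r (col' c M)).
Proof.
move=> [f [g [/increasing3_lift [r fr] /increasing3_lift [c gc] ->]]].
by exists r, c; congr (\det _); apply/matrixP => i j; rewrite !mxE fr gc.
Qed.

(* [unify] rather than [constr_eq]: nat sums written in ring_scope, as in [vy]
   and [vz], have type [GRing.PzSemiRing.sort nat] rather than [nat]. *)
Ltac decide_nat := repeat match goal with
  | |- context [@eq_op _ ?a ?b] =>
      let t := type of a in unify t nat;
      first [ rewrite (_ : (a == b) = false); last by apply/eqP; lia
            | rewrite (_ : (a == b) = true); last by apply/eqP; lia ]
  | |- context [(?a < ?b)%N] =>
      first [ rewrite (_ : (a < b)%N = false); last by apply/negbTE; rewrite -leqNgt; lia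
            | rewrite (_ : (a < b)%N = true); last by lia ]
  end.

Lemma other_index i r : (0 < i <= r)%N -> (1 < r)%N -> exists2 a, (0 < a <= r)%N & i != a.
Proof. by case: (eqVneq i 1) => [->|i1]; [exists 2%N | exists 1%N]; lia. Qed.

Lemma two_other_indices i r : (0 < i <= r)%N -> (2 < r)%N ->
  exists a b, [/\ (0 < a <= r)%N, (0 < b <= r)%N, i != a, i != b & a != b].
Proof.
case: (eqVneq i 1) => [->|i1]; first by exists 2%N, 3%N; split; lia.
by case: (eqVneq i 2) => [->|i2]; [exists 1%N, 3%N | exists 1%N, 2%N]; split; lia.
Qed.

Section JoinGraph.
Variables m n o : nat.
Local Notation N := (m + n + o)%N.
Local Notation PR := {mpoly int[N]}.
Local Notation L := (gen_laplacian (joinG m n o)).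
Local Notation I3 := (crit3_gens (joinG m n o)).
Local Notation x := (vx m n o).
Local Notation y := (vy m n o).
Local Notation z := (vz m n o).

Definition vclassn (a : nat) : nat :=
  if (a < m)%N then 0 else if (a < m + n)%N then 1 else 2.

Definition class_adj (k l : nat) : bool :=
  [|| (k == 0%N) && (l == 0%N), (k == 2%N) && (l == 2%N) | (k == 1%N) != (l == 1%N)].

Definition lapn (a b : nat) : PR :=
  if a == b then Xv N a else - (class_adj (vclassn a) (vclassn b) : nat)%:R.

Lemma lapnE (u v : 'I_N) : L u v = lapn u v.
Proof.
rewrite mxE /lapn /joinG; case: (eqVneq u v) => [<-|uv]; first by rewrite eqxx /Xv valK.
by rewrite ifF //; apply/negbTE.
Qed.

Lemma lap_minor3_in_I3 (a0 a1 a2 b0 b1 b2 : nat) :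
  (a0 < N)%N -> (a1 < N)%N -> (a2 < N)%N -> (b0 < N)%N -> (b1 < N)%N -> (b2 < N)%N ->
  ideal_gen I3 (minor3 lapn a0 a1 a2 b0 b1 b2).
Proof.
move=> a0N a1N a2N b0N b1N b2N.
have := minor3_ideal L (Ordinal a0N) (Ordinal a1N) (Ordinal a2N)
  (Ordinal b0N) (Ordinal b1N) (Ordinal b2N).
by rewrite /minor3 !lapnE.
Qed.

(* Rows and columns are vertex positions, written as in [vx], [vy], [vz]
   ([i.-1], [(m + j).-1], [(m + n + k).-1]) so that the diagonal entries of the
   minor are syntactically the variables of the goal. *)
Ltac minor_gives a0 a1 a2 b0 b1 b2 :=
  apply: (ideal_gen_pm (@lap_minor3_in_I3 a0 a1 a2 b0 b1 b2 _ _ _ _ _ _));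
  [lia.. | rewrite /minor3 /lapn /vclassn /vx /vy /vz /=; decide_nat; rewrite /class_adj /=;
           first [by left; ring | by right; ring]].

Lemma x_add1_in_I3 i : (0 < i <= m)%N -> (2 <= m)%N -> (0 < n)%N -> (0 < o)%N ->
  ideal_gen I3 (x i + 1).
Proof.
move=> hi hm hn ho; have [a ha ai] := other_index hi hm.
minor_gives i.-1 a.-1 m i.-1 (m + n) m.
Qed.

Lemma x_add1_in_I3_m3 i : (0 < i <= m)%N -> (3 <= m)%N -> (2 <= n)%N -> ideal_gen I3 (x i + 1).
Proof.
move=> hi hm hn; have [a [b [ha hb ai bi ab]]] := two_other_indices hi hm.
minor_gives i.-1 a.-1 m i.-1 b.-1 m.+1.
Qed.

Lemma x1_x2_add2_in_I3 : (2 <= m)%N -> (2 <= n)%N -> ideal_gen I3 (x 1 + x 2 + 2).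
Proof. by move=> hm hn; minor_gives 0%N 1%N m 0%N 1%N m.+1. Qed.

Lemma y_in_I3_n3 j : (0 < j <= n)%N -> (0 < m)%N -> (3 <= n)%N -> ideal_gen I3 (y j).
Proof.
move=> hj hm hn; have [a [b [ha hb ja jb ab]]] := two_other_indices hj hn.
minor_gives 0%N (m + j).-1 (m + a).-1 0%N (m + j).-1 (m + b).-1.
Qed.

Lemma y_in_I3 j : (0 < j <= n)%N -> (2 <= m)%N -> (2 <= n)%N -> (0 < o)%N -> ideal_gen I3 (y j).
Proof.
move=> hj hm hn ho; have [b hb jb] := other_index hj hn.
minor_gives 0%N (m + j).-1 (m + b).-1 1%N (m + n) (m + j).-1.
Qed.

Lemma z_add1_in_I3 k : (0 < k <= o)%N -> (2 <= m)%N -> (0 < n)%N -> (2 <= o)%N ->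
  ideal_gen I3 (z k + 1).
Proof.
move=> hk hm hn ho; have [c hc kc] := other_index hk ho.
minor_gives 0%N m (m + n + k).-1 1%N (m + n + k).-1 (m + n + c).-1.
Qed.

Lemma two_in_I3 : (2 <= m)%N -> (2 <= n)%N -> (2 <= o)%N -> ideal_gen I3 2.
Proof. by move=> *; minor_gives 0%N m (m + n) 1%N m.+1 (m + n).+1. Qed.

Lemma y1_add2_in_I3 : (2 <= m)%N -> (0 < n)%N -> (2 <= o)%N -> ideal_gen I3 (y 1 + 2).
Proof. by move=> *; minor_gives 0%N (m + 1).-1 (m + n) 1%N (m + 1).-1 (m + n).+1. Qed.

Lemma z1_sub1_in_I3 : (2 <= m)%N -> (2 <= n)%N -> (0 < o)%N -> ideal_gen I3 (z 1 - 1).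
Proof. by move=> *; minor_gives 0%N m (m + n + 1).-1 1%N (m + n + 1).-1 m.+1. Qed.

Lemma z1y1_z1_sub1_in_I3 : (2 <= m)%N -> (0 < n)%N -> (0 < o)%N ->
  ideal_gen I3 (z 1 * y 1 + z 1 - 1).
Proof. by move=> *; minor_gives 0%N (m + 1).-1 (m + n + 1).-1 1%N (m + 1).-1 (m + n + 1).-1. Qed.

Lemma xy1y2_in_I3 i : (0 < i <= m)%N -> (2 <= n)%N ->
  ideal_gen I3 (x i * y 1 * y 2 - y 1 - y 2).
Proof. by move=> *; minor_gives i.-1 (m + 1).-1 (m + 2).-1 i.-1 (m + 1).-1 (m + 2).-1. Qed.

Lemma x2y_add_y_in_I3 j : (0 < j <= 2)%N -> (2 <= m)%N -> (2 <= n)%N ->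
  ideal_gen I3 (x 2 * y j + y j).
Proof.
move=> hj hm hn; have [->|->] : j = 1%N \/ j = 2%N by lia.
- by minor_gives 0%N 1%N (m + 1).-1 1%N (m + 1).-1 (m + 2).-1.
- by minor_gives 0%N 1%N (m + 2).-1 1%N (m + 1).-1 (m + 2).-1.
Qed.

Variant vertex_spec : nat -> PR -> Prop :=
  | VertexX i of (0 < i <= m)%N : vertex_spec i.-1 (x i)
  | VertexY j of (0 < j <= n)%N : vertex_spec (m + j).-1 (y j)
  | VertexZ k of (0 < k <= o)%N : vertex_spec (m + n + k).-1 (z k).

Lemma vertexP (u : 'I_N) : vertex_spec u 'X_u.
Proof.
have -> : 'X_u = Xv N u by rewrite /Xv valK.
have uN := ltn_ord u; case: (ltnP u m) => [um|mu]; first exact: (@VertexX u.+1).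
case: (ltnP u (m + n)) => [umn|mnu].
  by rewrite (_ : (u : nat) = (m + (u - m).+1).-1); [apply: VertexY | ]; lia.
by rewrite (_ : (u : nat) = (m + n + (u - m - n).+1).-1); [apply: VertexZ | ]; lia.
Qed.

Definition block_mx (K : nat) (part : nat -> nat) (d : nat -> PR) : 'M[PR]_K :=
  \matrix_(k, l) if k == l then d k else - (class_adj (part k) (part l) : nat)%:R.

Section Quotient.
Variable S : PR -> Prop.

(* Vertex [a] lies in block [blk a]; block [k] lies in the vertex class [part k]
   and carries the diagonal entry [d k]. *)
Lemma crit3_sub_blocks K (blk part : nat -> nat) (d : nat -> PR) :
  (forall a, a < N -> blk a <= K)%N ->
  (forall a, a < N -> vclassn a = part (blk a))%N ->
  (forall i, 0 < i <= m -> cong S (x i) (d (blk i.-1)))%N ->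
  (forall j, 0 < j <= n -> cong S (y j) (d (blk (m + j).-1)))%N ->
  (forall k, 0 < k <= o -> cong S (z k) (d (blk (m + n + k).-1)))%N ->
  (forall a b, a < N -> b < N -> a != b -> blk a = blk b -> cong S (lapn a b) (d (blk a)))%N ->
  (forall p, is_minor3 (block_mx K.+1 part d) p -> ideal_gen S p) ->
  forall p, I3 p -> ideal_gen S p.
Proof.
move=> blkK hpart hx hy hz hsame; apply: (minor3_quotient (c := fun u => inord (blk u))) => u v.
have [uN vN] := (ltn_ord u, ltn_ord v).
rewrite lapnE mxE -(inj_eq val_inj) /= !inordK ?ltnS ?blkK //.
case: (eqVneq u v) => [<-|uv].
  rewrite eqxx /lapn eqxx /Xv valK; case: vertexP => [i|j|k]; [exact: hx | exact: hy | exact: hz].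
have uv' : (u : nat) != v by [].
case: (eqVneq (blk u) (blk v)) => [e|ne]; first exact: hsame.
by rewrite /lapn (negbTE uv') !hpart //; apply: cong_refl.
Qed.

Lemma crit3_sub_classes (d0 d1 d2 : PR) :
  (forall i, 0 < i <= m -> cong S (x i) d0)%N ->
  (forall j, 0 < j <= n -> cong S (y j) d1)%N ->
  (forall k, 0 < k <= o -> cong S (z k) d2)%N ->
  ((2 <= m)%N -> cong S (-1) d0) ->
  ((2 <= n)%N -> cong S 0 d1) ->
  ((2 <= o)%N -> cong S (-1) d2) ->
  ideal_gen S (d0 * d1 * d2 - d0 - d2) ->
  forall p, I3 p -> ideal_gen S p.
Proof.
move=> hx hy hz h0 h1 h2 hdet.
apply: (@crit3_sub_blocks 2 vclassn id (nth 0 [:: d0; d1; d2])).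
- by move=> a _; rewrite /vclassn; case: ifP => //; case: ifP.
- by [].
- by move=> i hi; rewrite /vclassn; decide_nat; exact: hx.
- by move=> j hj; rewrite /vclassn; decide_nat; exact: hy.
- by move=> k hk; rewrite /vclassn; decide_nat; exact: hz.
- move=> a b aN bN ab; rewrite /lapn (negbTE ab) /vclassn.
  case: (ltnP a m) => ?; case: (ltnP b m) => ?; case: (ltnP a (m + n)) => ?;
    case: (ltnP b (m + n)) => ? //= _;
    by rewrite ?oppr0; first [apply: h0 | apply: h1 | apply: h2]; lia.
- move=> p /is_minor3_det ->; rewrite det3 /minor3 !mxE /=.
  by apply: (ideal_gen_eq hdet); ring.
Qed.

End Quotient.

Lemma crit3_ideal_mge2_nge2_oge2 : (2 <= m)%N -> (2 <= n)%N -> (2 <= o)%N ->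
  same_ideal I3 (fun p => [\/ p = 2,
     exists2 i, (0 < i <= m)%N & p = x i + 1,
     exists2 j, (0 < j <= n)%N & p = y j
   | exists2 k, (0 < k <= o)%N & p = z k + 1]).
Proof.
move=> hm hn ho; apply: same_idealP => [|p [->|[i hi ->]|[j hj ->]|[k hk ->]]].
- apply: (@crit3_sub_classes _ (-1) 0 (-1)) => [i hi|j hj|k hk|||| ].
  + by apply/cong_opp_gen/ideal_gen_mem; constructor 2; exists i.
  + by apply/cong_gen0/ideal_gen_mem; constructor 3; exists j.
  + by apply/cong_opp_gen/ideal_gen_mem; constructor 4; exists k.
  + by move=> _; apply: cong_refl.
  + by move=> _; apply: cong_refl.
  + by move=> _; apply: cong_refl.
  + by apply: (@ideal_gen_eq _ _ 2); [apply: ideal_gen_mem; constructor 1 | ring].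
- exact: two_in_I3.
- by apply: x_add1_in_I3 => //; lia.
- by apply: y_in_I3 => //; lia.
- by apply: z_add1_in_I3 => //; lia.
Qed.

Lemma crit3_ideal_mge2_n1_oge2 : (2 <= m)%N -> n = 1%N -> (2 <= o)%N ->
  same_ideal I3 (fun p => [\/
     exists2 i, (0 < i <= m)%N & p = x i + 1,
     p = y 1%N + 2
   | exists2 k, (0 < k <= o)%N & p = z k + 1]).
Proof.
move=> hm hn ho; apply: same_idealP => [|p [[i hi ->]| ->|[k hk ->]]].
- apply: (@crit3_sub_classes _ (-1) (-2) (-1)) => [i hi|j hj|k hk|||| ].
  + by apply/cong_opp_gen/ideal_gen_mem; constructor 1; exists i.
  + have -> : j = 1%N by lia.
    by apply/cong_opp_gen/ideal_gen_mem; constructor 2.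
  + by apply/cong_opp_gen/ideal_gen_mem; constructor 3; exists k.
  + by move=> _; apply: cong_refl.
  + by rewrite hn.
  + by move=> _; apply: cong_refl.
  + by apply: (@ideal_gen_eq _ _ 0); [apply: ideal_gen0 | ring].
- by apply: x_add1_in_I3 => //; lia.
- by apply: y1_add2_in_I3 => //; lia.
- by apply: z_add1_in_I3 => //; lia.
Qed.

Lemma crit3_ideal_mge2_nge2_o1 : (2 <= m)%N -> (2 <= n)%N -> o = 1%N ->
  same_ideal I3 (fun p => [\/
     exists2 i, (0 < i <= m)%N & p = x i + 1,
     exists2 j, (0 < j <= n)%N & p = y j
   | p = z 1%N - 1]).
Proof.
move=> hm hn ho; apply: same_idealP => [|p [[i hi ->]|[j hj ->]| ->]].
- apply: (@crit3_sub_classes _ (-1) 0 1) => [i hi|j hj|k hk|||| ].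
  + by apply/cong_opp_gen/ideal_gen_mem; constructor 1; exists i.
  + by apply/cong_gen0/ideal_gen_mem; constructor 2; exists j.
  + have -> : k = 1%N by lia.
    by apply: ideal_gen_mem; constructor 3.
  + by move=> _; apply: cong_refl.
  + by move=> _; apply: cong_refl.
  + by rewrite ho.
  + by apply: (@ideal_gen_eq _ _ 0); [apply: ideal_gen0 | ring].
- by apply: x_add1_in_I3 => //; lia.
- by apply: y_in_I3 => //; lia.
- by apply: z1_sub1_in_I3 => //; lia.
Qed.

Lemma crit3_ideal_mge2_n1_o1 : (2 <= m)%N -> n = 1%N -> o = 1%N ->
  same_ideal I3 (fun p =>
     (exists2 i, (0 < i <= m)%N & p = x i + 1) \/ p = z 1%N * y 1%N + z 1%N - 1).
Proof.
move=> hm hn ho; apply: same_idealP => [|p [[i hi ->]| ->]].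
- apply: (@crit3_sub_classes _ (-1) (y 1) (z 1)) => [i hi|j hj|k hk|||| ].
  + by apply/cong_opp_gen/ideal_gen_mem; left; exists i.
  + by rewrite (_ : j = 1%N); [apply: cong_refl | lia].
  + by rewrite (_ : k = 1%N); [apply: cong_refl | lia].
  + by move=> _; apply: cong_refl.
  + by rewrite hn.
  + by rewrite ho.
  + apply: (@ideal_gen_eq _ _ (- (z 1 * y 1 + z 1 - 1))); last by ring.
    by apply/ideal_genN/ideal_gen_mem; right.
- by apply: x_add1_in_I3 => //; lia.
- by apply: z1y1_z1_sub1_in_I3 => //; lia.
Qed.

Lemma crit3_ideal_mge3_nge3_o0 : (3 <= m)%N -> (3 <= n)%N -> o = 0%N ->
  same_ideal I3 (fun p =>
     (exists2 i, (0 < i <= m)%N & p = x i + 1) \/ (exists2 j, (0 < j <= n)%N & p = y j)).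
Proof.
move=> hm hn ho; apply: same_idealP => [|p [[i hi ->]|[j hj ->]]].
- apply: (@crit3_sub_classes _ (-1) 0 1) => [i hi|j hj|k hk|||| ].
  + by apply/cong_opp_gen/ideal_gen_mem; left; exists i.
  + by apply/cong_gen0/ideal_gen_mem; right; exists j.
  + by exfalso; lia.
  + by move=> _; apply: cong_refl.
  + by move=> _; apply: cong_refl.
  + by rewrite ho.
  + by apply: (@ideal_gen_eq _ _ 0); [apply: ideal_gen0 | ring].
- by apply: x_add1_in_I3_m3 => //; lia.
- by apply: y_in_I3_n3 => //; lia.
Qed.

Lemma crit3_ideal_mge3_n2_o0 : (3 <= m)%N -> n = 2%N -> o = 0%N ->
  same_ideal I3 (fun p =>
     (exists2 i, (0 < i <= m)%N & p = x i + 1) \/ p = y 1%N * y 2%N + y 1%N + y 2%N).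
Proof.
move=> hm hn ho; apply: same_idealP => [|p [[i hi ->]| ->]].
- apply: (@crit3_sub_blocks _ 2 (fun a => a - m.-1)%N (fun k => minn k 1)
    (nth 0 [:: -1; y 1%N; y 2%N]))
    => [a aN|a aN|i hi|j hj|k hk|a b aN bN ab e|p /is_minor3_det ->].
  + lia.
  + by rewrite /vclassn; case: ltnP => ?; case: ltnP => ? /=; lia.
  + rewrite (_ : i.-1 - m.-1 = 0)%N /=; last lia.
    by apply/cong_opp_gen/ideal_gen_mem; left; exists i.
  + rewrite (_ : (m + j).-1 - m.-1 = j)%N; last lia.
    have j12 : j = 1%N \/ j = 2%N by lia.
    by case: j12 => ->; apply: cong_refl.
  + by exfalso; lia.
  + rewrite /lapn (negbTE ab) /vclassn; decide_nat.
    by rewrite (_ : a - m.-1 = 0)%N; [apply: cong_refl | lia].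
  + rewrite det3 /minor3 !mxE /=.
    apply: (@ideal_gen_eq _ _ (- (y 1 * y 2 + y 1 + y 2))); last by ring.
    by apply/ideal_genN/ideal_gen_mem; right.
- by apply: x_add1_in_I3_m3 => //; lia.
- have h1 : ideal_gen I3 (x 1 + 1) by apply: x_add1_in_I3_m3 => //; lia.
  have h2 : ideal_gen I3 (x 1 * y 1 * y 2 - y 1 - y 2) by apply: xy1y2_in_I3 => //; lia.
  by apply: (ideal_gen_eq (ideal_genB (ideal_genMr (y 1 * y 2) h1) h2)); ring.
Qed.

Lemma crit3_ideal_m2_nge3_o0 : m = 2%N -> (3 <= n)%N -> o = 0%N ->
  same_ideal I3 (fun p => p = x 1%N + x 2%N + 2 \/ exists2 j, (0 < j <= n)%N & p = y j).
Proof.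
move=> hm hn ho; apply: same_idealP => [|p [->|[j hj ->]]].
- apply: (@crit3_sub_blocks _ 2 (fun a => minn a 2) (fun k => k - 1)%N
    (nth 0 [:: x 1%N; -2 - x 1%N; 0]))
    => [a aN|a aN|i hi|j hj|k hk|a b aN bN ab e|p /is_minor3_det ->].
  + lia.
  + by rewrite /vclassn; case: ltnP => ?; case: ltnP => ? /=; lia.
  + have i12 : i = 1%N \/ i = 2%N by lia.
    case: i12 => -> /=; first exact: cong_refl.
    apply: (@ideal_gen_eq _ _ (x 1%N + x 2%N + 2)); last by rewrite /=; ring.
    by apply: ideal_gen_mem; left.
  + rewrite (_ : minn _ 2 = 2)%N; last lia.
    by apply/cong_gen0/ideal_gen_mem; right; exists j.
  + by exfalso; lia.
  + rewrite /lapn (negbTE ab) /vclassn; decide_nat.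
    by rewrite (_ : minn a 2 = 2)%N /= ?oppr0; [apply: cong_refl | lia].
  + rewrite det3 /minor3 !mxE /=.
    by apply: (@ideal_gen_eq _ _ 0); [apply: ideal_gen0 | ring].
- by apply: x1_x2_add2_in_I3; lia.
- by apply: y_in_I3_n3 => //; lia.
Qed.

Lemma crit3_ideal_m2_n2_o0 : m = 2%N -> n = 2%N -> o = 0%N ->
  same_ideal I3 (fun p => [\/ p = x 1%N + x 2%N + 2,
     p = x 2%N * y 1%N + y 1%N,
     p = x 2%N * y 2%N + y 2%N
   | p = y 1%N * y 2%N + y 1%N + y 2%N]).
Proof.
move=> hm hn ho.
have [G0 G1 G2 G3] : [/\ ideal_gen I3 (x 1%N + x 2%N + 2), ideal_gen I3 (x 2%N * y 1%N + y 1%N),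
    ideal_gen I3 (x 2%N * y 2%N + y 2%N) & ideal_gen I3 (x 2%N * y 1%N * y 2%N - y 1%N - y 2%N)].
  by split; [apply: x1_x2_add2_in_I3 | apply: x2y_add_y_in_I3 | apply: x2y_add_y_in_I3
    | apply: xy1y2_in_I3]; lia.
apply: same_idealP => [|p [->| -> | -> | ->]] //.
- apply: (@crit3_sub_blocks _ 3 id (fun k => k./2)
    (nth 0 [:: -2 - x 2%N; x 2%N; y 1%N; y 2%N]))
    => [a aN|a aN|i hi|j hj|k hk|a b aN bN ab /= e|p /is_minor3_cofactor [r [c ->]]].
  + lia.
  + by move: aN; rewrite /vclassn hm hn ho; case: a => [|[|[|[|]]]].
  + have i12 : i = 1%N \/ i = 2%N by lia.
    case: i12 => -> /=; last exact: cong_refl.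
    apply: (@ideal_gen_eq _ _ (x 1%N + x 2%N + 2)); last by rewrite /=; ring.
    by apply: ideal_gen_mem; constructor 1.
  + have j12 : j = 1%N \/ j = 2%N by lia.
    by case: j12 => ->; rewrite hm /=; apply: cong_refl.
  + by exfalso; lia.
  + by rewrite e eqxx in ab.
  + set S := fun p => _.
    have S1 : ideal_gen S (x 2%N * y 1%N + y 1%N) by apply: ideal_gen_mem; constructor 2.
    have S2 : ideal_gen S (x 2%N * y 2%N + y 2%N) by apply: ideal_gen_mem; constructor 3.
    have S3 : ideal_gen S (y 1%N * y 2%N + y 1%N + y 2%N) by apply: ideal_gen_mem; constructor 4.
    case: r => [[|[|[|[|?]]]] ?] //; case: c => [[|[|[|[|?]]]] ?] //;
      rewrite det3 /minor3 !mxE /=;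
      first [ apply: (ideal_gen_eq (ideal_gen0 S)); ring
            | apply: (ideal_gen_eq S1); ring | apply: (ideal_gen_eq (ideal_genN S1)); ring
            | apply: (ideal_gen_eq S2); ring | apply: (ideal_gen_eq (ideal_genN S2)); ring
            | apply: (ideal_gen_eq (ideal_genN (ideal_genMl (x 2%N + 1) S1))); ring
            | apply: (ideal_gen_eq (ideal_genN (ideal_genMl (x 2%N + 1) S2))); ring
            | apply: (ideal_gen_eq (ideal_genN S3)); ring
            | apply: (ideal_gen_eq (ideal_genN (ideal_genD (ideal_genMl (y 1%N) S2) S3))); ring
            | apply: (ideal_gen_eq (ideal_genB (ideal_genMl (y 2%N) S1) S3)); ring ].
- apply: (ideal_gen_eq (ideal_genB (ideal_genMl (y 2%N) G1) G3)); ring.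
Qed.

End JoinGraph.

Lemma joinG_1n1_complete_bipartite n : (0 < n)%N -> graph_complete_bipartite (joinG 1 n 1).
Proof.
move=> n0; have [y1 x1] : (1 < 1 + n + 1)%N /\ (0 < 1 + n + 1)%N by lia.
exists [set u | vclass u == 1%N]; split.
- by apply/set0Pn; exists (Ordinal y1); rewrite inE /vclass /=; decide_nat.
- by apply/set0Pn; exists (Ordinal x1); rewrite !inE.
move=> u v; rewrite !inE /joinG /vclass -(inj_eq val_inj) /=.
have [uN vN] := (ltn_ord u, ltn_ord v).
have Du : u = 0%N :> nat \/ (1 <= u <= n)%N \/ u = n.+1 :> nat by lia.
have Dv : v = 0%N :> nat \/ (1 <= v <= n)%N \/ v = n.+1 :> nat by lia.
by case: Du => [u0|[u1|u2]]; case: Dv => [v0|[v1|v2]]; rewrite ?u0 ?v0 ?u2 ?v2;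
  decide_nat; rewrite /= ?andbF ?andbT.
Qed.

Theorem theorem4p5 (m n o : nat) :
  (o <= m)%N -> (4 <= m + n + o)%N ->
  graph_connected (joinG m n o) ->
  ~ graph_complete (joinG m n o) ->
  ~ graph_complete_bipartite (joinG m n o) ->
  let I3 := crit3_gens (joinG m n o) in
  let x := vx m n o in let y := vy m n o in let z := vz m n o in
   ((2 <= m)%N -> (2 <= n)%N -> (2 <= o)%N ->
     same_ideal I3 (fun p => [\/ p = 2,
        exists2 i, (0 < i <= m)%N & p = x i + 1,
        exists2 j, (0 < j <= n)%N & p = y j
      | exists2 k, (0 < k <= o)%N & p = z k + 1])) /\
   ((2 <= m)%N -> n = 1%N -> (2 <= o)%N ->
     same_ideal I3 (fun p => [\/
        exists2 i, (0 < i <= m)%N & p = x i + 1,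
        p = y 1%N + 2
      | exists2 k, (0 < k <= o)%N & p = z k + 1])) /\
   ((2 <= m)%N -> (2 <= n)%N -> o = 1%N ->
     same_ideal I3 (fun p => [\/
        exists2 i, (0 < i <= m)%N & p = x i + 1,
        exists2 j, (0 < j <= n)%N & p = y j
      | p = z 1%N - 1])) /\
   (m = 1%N -> (3 <= n)%N -> o = 1%N ->
     same_ideal I3 (fun p => p = x 1%N + z 1%N \/
        exists2 j, (0 < j <= n)%N & p = y j)) /\
   (m = 1%N -> n = 2%N -> o = 1%N ->
     same_ideal I3 (fun p => [\/ p = x 1%N + z 1%N,
        p = y 1%N + y 2%N | p = y 2%N * z 1%N])) /\
   ((2 <= m)%N -> n = 1%N -> o = 1%N ->
     same_ideal I3 (fun p =>
        (exists2 i, (0 < i <= m)%N & p = x i + 1) \/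
        p = z 1%N * y 1%N + z 1%N - 1)) /\
   ((3 <= m)%N -> (3 <= n)%N -> o = 0%N ->
     same_ideal I3 (fun p =>
        (exists2 i, (0 < i <= m)%N & p = x i + 1) \/
        (exists2 j, (0 < j <= n)%N & p = y j))) /\
   (m = 2%N -> (3 <= n)%N -> o = 0%N ->
     same_ideal I3 (fun p => p = x 1%N + x 2%N + 2 \/
        exists2 j, (0 < j <= n)%N & p = y j)) /\
   ((3 <= m)%N -> n = 2%N -> o = 0%N ->
     same_ideal I3 (fun p =>
        (exists2 i, (0 < i <= m)%N & p = x i + 1) \/
        p = y 1%N * y 2%N + y 1%N + y 2%N)) /\
   (m = 2%N -> n = 2%N -> o = 0%N ->
     same_ideal I3 (fun p => [\/ p = x 1%N + x 2%N + 2,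
        p = x 2%N * y 1%N + y 1%N,
        p = x 2%N * y 2%N + y 2%N
      | p = y 1%N * y 2%N + y 1%N + y 2%N])).
Proof.
move=> _ _ _ _ not_bip I3 x y z.
have m1o1 : m = 1%N -> (0 < n)%N -> o = 1%N -> False.
  by move=> m1 n0 o1; apply: not_bip; rewrite m1 o1; apply: joinG_1n1_complete_bipartite.
split; first exact: crit3_ideal_mge2_nge2_oge2.
split; first exact: crit3_ideal_mge2_n1_oge2.
split; first exact: crit3_ideal_mge2_nge2_o1.
split; first by move=> m1 n3 o1; case: (m1o1 m1 _ o1); lia.
split; first by move=> m1 n2 o1; case: (m1o1 m1 _ o1); lia.
split; first exact: crit3_ideal_mge2_n1_o1.
split; first exact: crit3_ideal_mge3_nge3_o0.
split; first exact: crit3_ideal_m2_nge3_o0.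
split; first exact: crit3_ideal_mge3_n2_o0.
exact: crit3_ideal_m2_n2_o0.
Qed.
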